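(* Let $n\ge 2$, $a>1$, $p,q\in\mathbb{R}$, and let $f_t(x)$, $(t,x)\in[0,T)\times[1,a]$, be a solution of $$\dot f=u''(x)\left(\frac{f''}{1+f'^2}+(n-1)\frac{xf'-f}{x^2+f^2}\right),\qquad f_t(1)=q,\ f_t(a)=p.$$ Then there exist uniform constants $A,B$ (independent of $t$) such that $$|f_t'(1)|+|f_t'(a)|\leq Ae^{Bt}\quad\text{for all }t\in[0,T).$$
   Context: Setting: $X$ is the blowup of $\mathbb{P}^n$ at a point, $\omega=i\partial\bar\partial u(\rho)$ a Calabi-symmetric K\''ahler form in the class $a[H]-[E]$ ($\rho=\log|z|^2$ on $\mathbb{C}^n\setminus\{0\}$, $u'>0,u''>0$, with $u(\log r)-\log r$ and $u(-\log r)+a\log r$ smooth up to $r=0$ with positive derivative there). In the Legendre coordinate $x=u'(\rho)\in[1,a]$, $u''$ is a smooth function of $x$ on $[1,a]$, positive on $(1,a)$, vanishing linearly at $x=1$ and $x=a$. A Calabi-symmetric form $\alpha=i\partial\bar\partial v(\rho)$ in $p[H]-q[E]$ corresponds to $f(x)=v'(\rho)$ with $f(1)=q$, $f(a)=p$; the line bundle mean curvature flow becomes the displayed equation for $f$. *)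

From Stdlib Require Import Reals.
From Coquelicot Require Import Coquelicot.
Open Scope R_scope.

(* Partial derivatives of f : R -> R -> R, f t x, t = time, x = Legendre coordinate. *)
Definition dx (f : R -> R -> R) (t x : R) : R := Derive (fun y => f t y) x.
Definition dxx (f : R -> R -> R) (t x : R) : R := Derive (fun y => dx f t y) x.
Definition dt (f : R -> R -> R) (t x : R) : R := Derive (fun s => f s x) t.

Definition cont2 (g : R -> R -> R) (t x : R) : Prop :=
  continuous (fun p : R * R => g (fst p) (snd p)) (t, x).

Definition smooth (g : R -> R) : Prop := forall (k : nat) (x : R), ex_derive_n g k x.

(* Hypotheses on u'' viewed as a function phi of the Legendre coordinate x on [1,a]:
   smooth, positive on (1,a), vanishing linearly at x = 1 and x = a. *)
Definition legendre_u2 (a : R) (phi : R -> R) : Prop :=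
  smooth phi /\
  (forall x, 1 < x < a -> 0 < phi x) /\
  phi 1 = 0 /\ phi a = 0 /\
  Derive phi 1 <> 0 /\ Derive phi a <> 0.

Definition is_LMCF_solution (n : nat) (a p q : R) (phi : R -> R) (T : Rbar)
    (f : R -> R -> R) : Prop :=
  forall t x, 0 <= t -> Rbar_lt (Finite t) T -> 1 <= x <= a ->
    ex_derive (fun s => f s x) t /\
    ex_derive (fun y => f t y) x /\
    ex_derive (fun y => dx f t y) x /\
    cont2 f t x /\ cont2 (dt f) t x /\ cont2 (dx f) t x /\ cont2 (dxx f) t x /\
    dt f t x = phi x * ( dxx f t x / (1 + (dx f t x) ^ 2)
                         + (INR n - 1) * (x * dx f t x - f t x) / (x ^ 2 + (f t x) ^ 2) ) /\
    f t 1 = q /\ f t a = p.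

From Stdlib Require Import Reals Lra Lia ClassicalEpsilon.
From Coquelicot Require Import Coquelicot.
Open Scope R_scope.

(* Barrier argument.  Since u'' vanishes at both ends and is Lipschitz, u''(x) <= C (x - 1)
   and u''(x) <= C (a - x).  The functions q + K e^{Bt} (x - 1) and p + K e^{Bt} (a - x) have no
   x-curvature, and the factor u'' kills the lower-order term at the endpoint where the barrier
   is pinned, so for B large they are supersolutions; K is chosen so that they dominate f_0 and
   the boundary data.  A maximum principle for e^{-lambda t} (f - w) on [0,t1] x [1,a] gives
   f <= w, and as f and w agree at the endpoint, f'_t(1) <= K e^{Bt} and f'_t(a) >= -K e^{Bt}.
   The equation is invariant under f -> -f, which gives the opposite bounds. *)

Lemma is_derive_pos_sign (h : R -> R) (x0 l : R) :
  is_derive h x0 l -> 0 < l ->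
  exists del, 0 < del /\
    forall s, s <> x0 -> Rabs (s - x0) < del -> 0 < (h s - h x0) * (s - x0).
Proof.
  intros Hd Hl. apply is_derive_Reals in Hd.
  destruct (Hd l Hl) as [del Hdel].
  exists del; split; [apply cond_pos |].
  intros s Hs Hsd.
  assert (Hne : s - x0 <> 0) by lra.
  specialize (Hdel (s - x0) Hne Hsd).
  replace (x0 + (s - x0)) with s in Hdel by ring.
  apply Rabs_def2 in Hdel.
  replace ((h s - h x0) * (s - x0)) with ((h s - h x0) / (s - x0) * (s - x0) ^ 2)
    by (field; exact Hne).
  apply Rmult_lt_0_compat; [lra | apply pow2_gt_0, Hne].
Qed.

Lemma is_derive_max_right (h : R -> R) (x0 hi l : R) :
  x0 < hi -> (forall s, x0 <= s <= hi -> h s <= h x0) -> is_derive h x0 l -> l <= 0.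
Proof.
  intros Hx Hmax Hd. apply Rnot_lt_le; intros Hl.
  destruct (is_derive_pos_sign h x0 l Hd Hl) as [del [Hdel Hsign]].
  set (s := Rmin (x0 + del / 2) hi).
  assert (Hs : x0 < s <= hi) by (unfold s, Rmin; destruct Rle_dec; lra).
  assert (Hsd : s - x0 < del) by (unfold s, Rmin in *; destruct Rle_dec; lra).
  specialize (Hsign s ltac:(lra) ltac:(rewrite Rabs_pos_eq; lra)).
  specialize (Hmax s ltac:(lra)). nra.
Qed.

Lemma is_derive_max_left (h : R -> R) (lo x0 l : R) :
  lo < x0 -> (forall s, lo <= s <= x0 -> h s <= h x0) -> is_derive h x0 l -> 0 <= l.
Proof.
  intros Hx Hmax Hd. apply Rnot_lt_le; intros Hl.
  destruct (is_derive_pos_sign (fun y => - h y) x0 (- l) (is_derive_opp h x0 l Hd))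
    as [del [Hdel Hsign]]; [lra |].
  set (s := Rmax (x0 - del / 2) lo).
  assert (Hs : lo <= s < x0) by (unfold s, Rmax; destruct Rle_dec; lra).
  assert (Hsd : x0 - s < del) by (unfold s, Rmax in *; destruct Rle_dec; lra).
  specialize (Hsign s ltac:(lra) ltac:(rewrite Rabs_left; lra)).
  specialize (Hmax s ltac:(lra)). nra.
Qed.

Lemma is_derive_max_interior (h : R -> R) (lo x0 hi l : R) :
  lo < x0 < hi -> (forall s, lo <= s <= hi -> h s <= h x0) -> is_derive h x0 l -> l = 0.
Proof.
  intros Hx Hmax Hd.
  assert (l <= 0)
    by (apply (is_derive_max_right h x0 hi); [lra | intros; apply Hmax; lra | exact Hd]).
  assert (0 <= l)
    by (apply (is_derive_max_left h lo x0); [lra | intros; apply Hmax; lra | exact Hd]).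
  lra.
Qed.

Lemma is_derive_le_of_touch_right (g h : R -> R) (x0 hi dg dh : R) :
  x0 < hi -> (forall s, x0 <= s <= hi -> g s <= h s) -> g x0 = h x0 ->
  is_derive g x0 dg -> is_derive h x0 dh -> dg <= dh.
Proof.
  intros Hx Hle Heq Hg Hh.
  pose proof (is_derive_max_right (fun s => g s - h s) x0 hi (dg - dh) Hx
                ltac:(intros s Hs; specialize (Hle s Hs); lra)
                (is_derive_minus g h x0 dg dh Hg Hh)).
  lra.
Qed.

Lemma is_derive_le_of_touch_left (g h : R -> R) (lo x0 dg dh : R) :
  lo < x0 -> (forall s, lo <= s <= x0 -> g s <= h s) -> g x0 = h x0 ->
  is_derive g x0 dg -> is_derive h x0 dh -> dh <= dg.
Proof.
  intros Hx Hle Heq Hg Hh.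
  pose proof (is_derive_max_left (fun s => g s - h s) lo x0 (dg - dh) Hx
                ltac:(intros s Hs; specialize (Hle s Hs); lra)
                (is_derive_minus g h x0 dg dh Hg Hh)).
  lra.
Qed.

Lemma is_derive2_max_interior (h h1 : R -> R) (lo x0 hi c : R) :
  lo < x0 < hi -> (forall s, lo <= s <= hi -> h s <= h x0) ->
  (forall s, lo < s < hi -> is_derive h s (h1 s)) -> is_derive h1 x0 c -> c <= 0.
Proof.
  intros Hx Hmax Hd Hd1. apply Rnot_lt_le; intros Hc.
  assert (Hcrit : h1 x0 = 0) by (apply (is_derive_max_interior h lo x0 hi); auto).
  destruct (is_derive_pos_sign h1 x0 c Hd1 Hc) as [del [Hdel Hsign]].
  set (s := Rmin (x0 + del / 2) ((x0 + hi) / 2)).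
  assert (Hs : x0 < s < hi) by (unfold s, Rmin; destruct Rle_dec; lra).
  assert (Hsd : s - x0 < del) by (unfold s, Rmin in *; destruct Rle_dec; lra).
  destruct (MVT_cor2 h h1 x0 s) as [xi [Hmvt Hxi]];
    [lra | intros y Hy; apply is_derive_Reals, Hd; lra |].
  specialize (Hsign xi ltac:(lra) ltac:(rewrite Rabs_pos_eq; lra)).
  rewrite Hcrit in Hsign.
  specialize (Hmax s ltac:(lra)). nra.
Qed.

Lemma exp_weighted_max_left (D : R -> R) (lam lo t0 dD : R) :
  lo < t0 ->
  (forall s, lo <= s <= t0 -> exp (- lam * s) * D s <= exp (- lam * t0) * D t0) ->
  is_derive D t0 dD -> lam * D t0 <= dD.
Proof.
  intros Ht Hmax Hd.
  assert (Hk : is_derive (fun s => exp (- lam * s) * D s) t0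
                 ((- lam * exp (- lam * t0)) * D t0 + exp (- lam * t0) * dD)).
  { apply (is_derive_mult (fun s => exp (- lam * s)) D);
      [auto_derive; [auto | ring] | exact Hd | intros; apply Rmult_comm]. }
  pose proof (is_derive_max_left _ lo t0 _ Ht Hmax Hk).
  pose proof (exp_pos (- lam * t0)). nra.
Qed.

Lemma lipschitz_of_continuous_derive (g dg : R -> R) (c d : R) :
  c <= d ->
  (forall x, c <= x <= d -> is_derive g x (dg x)) ->
  (forall x, c <= x <= d -> continuity_pt dg x) ->
  exists M, 0 <= M /\
    forall x y, c <= x <= d -> c <= y <= d -> Rabs (g x - g y) <= M * Rabs (x - y).
Proof.
  intros Hcd Hd Hc.
  destruct (continuity_ab_maj (fun x => Rabs (dg x)) c d Hcd) as [xM [HxM HxMin]].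
  { intros x Hx. apply (continuity_pt_comp dg Rabs x (Hc x Hx)), Rcontinuity_abs. }
  exists (Rabs (dg xM)). split; [apply Rabs_pos |].
  intros x y Hx Hy.
  assert (Hmin : c <= Rmin y x) by (apply Rmin_glb; lra).
  assert (Hmax : Rmax y x <= d) by (apply Rmax_lub; lra).
  destruct (MVT_abs g dg y x) as [xi [Hmvt Hxi]].
  { intros z Hz. apply is_derive_Reals, Hd. lra. }
  rewrite Hmvt. apply Rmult_le_compat_r; [apply Rabs_pos | apply HxM; lra].
Qed.

Lemma legendre_u2_linear_bounds (a : R) (phi : R -> R) :
  1 < a -> legendre_u2 a phi ->
  exists C, 0 <= C /\ forall x, 1 <= x <= a ->
    0 <= phi x /\ phi x <= C * (x - 1) /\ phi x <= C * (a - x).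
Proof.
  intros Ha [Hsmooth [Hpos [H1 [Ha0 _]]]].
  destruct (lipschitz_of_continuous_derive phi (Derive phi) 1 a) as [C [HC Hlip]]; [lra | | |].
  - intros x _. apply Derive_correct, (Hsmooth 1%nat x).
  - intros x _. apply continuity_pt_filterlim.
    apply (@ex_derive_continuous R_AbsRing R_NormedModule), (Hsmooth 2%nat x).
  - exists C. split; [exact HC |]. intros x Hx.
    pose proof (Rle_abs (phi x - phi 1)). pose proof (Rle_abs (phi x - phi a)).
    specialize (Hlip x 1 Hx ltac:(lra)) as Hl1. specialize (Hlip x a Hx ltac:(lra)) as Hla.
    rewrite (Rabs_pos_eq (x - 1)) in Hl1 by lra. rewrite (Rabs_left1 (x - a)) in Hla by lra.
    split; [| split; nra].
    destruct (Req_dec x 1) as [-> | ?]; [lra |].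
    destruct (Req_dec x a) as [-> | ?]; [lra |].
    left. apply Hpos. lra.
Qed.

Lemma cont2_ball (g : R -> R -> R) (t x eps : R) :
  cont2 g t x -> 0 < eps ->
  exists del, 0 < del /\
    forall s y, Rabs (s - t) < del -> Rabs (y - x) < del -> Rabs (g s y - g t x) < eps.
Proof.
  intros H He.
  destruct (proj1 (filterlim_locally _ _) H (mkposreal eps He)) as [del Hdel].
  exists del; split; [apply cond_pos |].
  intros s y Hs Hy. apply (Hdel (s, y)). split; assumption.
Qed.

Lemma cont2_continuity_pt (g : R -> R -> R) (t x : R) : cont2 g t x -> continuity_pt (g t) x.
Proof.
  intros H. apply continuity_pt_filterlim.
  apply (continuous_comp_2 (fun _ => t) (fun y => y) g);
    [apply continuous_const | apply continuous_id | exact H].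
Qed.

Lemma cont2_ext (g h : R -> R -> R) (t x : R) :
  (forall t x, g t x = h t x) -> cont2 g t x -> cont2 h t x.
Proof. intros E. apply continuous_ext. intros; apply E. Qed.

Lemma cont2_opp (g : R -> R -> R) (t x : R) : cont2 g t x -> cont2 (fun t x => - g t x) t x.
Proof. apply (continuous_opp (fun p : R * R => g (fst p) (snd p))). Qed.

Lemma cont2_abs (g : R -> R -> R) (t x : R) : cont2 g t x -> cont2 (fun t x => Rabs (g t x)) t x.
Proof.
  intros H. apply (continuous_comp (fun p : R * R => g (fst p) (snd p)) Rabs);
    [exact H | apply continuous_Rabs].
Qed.

Lemma cont2_exp_weighted_diff (f w : R -> R -> R) (lam t x : R) :
  cont2 f t x -> cont2 w t x -> cont2 (fun t x => exp (- lam * t) * (f t x - w t x)) t x.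
Proof.
  intros Hf Hw.
  apply (continuous_mult (fun p : R * R => exp (- lam * fst p))
                         (fun p : R * R => f (fst p) (snd p) - w (fst p) (snd p))).
  - apply (continuous_comp (fun p : R * R => fst p) (fun s => exp (- lam * s)));
      [apply continuous_fst |
       apply (@ex_derive_continuous R_AbsRing R_NormedModule); auto_derive; auto].
  - apply (continuous_minus (fun p : R * R => f (fst p) (snd p))
                            (fun p : R * R => w (fst p) (snd p))); assumption.
Qed.

Lemma cont2_uniform_upper (g : R -> R -> R) (t c d eps : R) :
  (forall z, c <= z <= d -> cont2 g t z) -> 0 < eps ->
  exists del, 0 < del /\
    forall s y, Rabs (s - t) < del -> c <= y <= d ->
      exists z, c <= z <= d /\ g s y < g t z + eps.
Proof.
  intros Hg He.
  assert (Hdel : forall z, exists del : posreal, c <= z <= d ->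
            forall s y, Rabs (s - t) < del -> Rabs (y - z) < del -> Rabs (g s y - g t z) < eps).
  { intros z. destruct (classic (c <= z <= d)) as [Hz | Hz].
    - destruct (cont2_ball g t z eps (Hg z Hz) He) as [del [Hdel H]].
      exists (mkposreal del Hdel). intros _. exact H.
    - exists (mkposreal 1 Rlt_0_1). intros Hz'. contradiction. }
  destruct (choice _ Hdel) as [delta Hdelta].
  destruct (compactness_value_1d c d delta) as [d0 Hd0].
  exists d0. split; [apply cond_pos |].
  intros s y Hs Hy.
  apply NNPP. intros Hno. apply (Hd0 y Hy). intros [z [Hz [Hyz Hd0z]]].
  apply Hno. exists z. split; [exact Hz |].
  specialize (Hdelta z Hz s y ltac:(lra) Hyz). apply Rabs_def2 in Hdelta. lra.
Qed.

Section MaxOnRectangle.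

Variables (g : R -> R -> R) (t1 c d : R).
Hypothesis c_le_d : c <= d.
Hypothesis g_cont : forall t x, 0 <= t <= t1 -> c <= x <= d -> cont2 g t x.

Lemma slice_argmax :
  exists xm : R -> R, forall t, 0 <= t <= t1 ->
    c <= xm t <= d /\ forall y, c <= y <= d -> g t y <= g t (xm t).
Proof.
  apply (choice (fun t z => 0 <= t <= t1 ->
                   c <= z <= d /\ forall y, c <= y <= d -> g t y <= g t z)).
  intros t. destruct (classic (0 <= t <= t1)) as [Ht | Ht].
  - destruct (continuity_ab_maj (g t) c d c_le_d) as [z [Hz Hzin]].
    + intros x Hx. apply cont2_continuity_pt, g_cont; assumption.
    + exists z. auto.
  - exists c. intros; contradiction.
Qed.

Lemma slice_max_continuous (xm : R -> R) :
  (forall t, 0 <= t <= t1 -> c <= xm t <= d /\ forall y, c <= y <= d -> g t y <= g t (xm t)) ->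
  forall t eps, 0 <= t <= t1 -> 0 < eps ->
  exists del, 0 < del /\ forall s, 0 <= s <= t1 -> Rabs (s - t) < del ->
    Rabs (g s (xm s) - g t (xm t)) < eps.
Proof.
  intros Hxm t eps Ht He.
  destruct (Hxm t Ht) as [Hxt Hmaxt].
  destruct (cont2_ball g t (xm t) eps (g_cont t (xm t) Ht Hxt) He) as [d1 [Hd1 Hball]].
  destruct (cont2_uniform_upper g t c d eps (fun z Hz => g_cont t z Ht Hz) He)
    as [d2 [Hd2 Hupper]].
  exists (Rmin d1 d2). split; [apply Rmin_pos; assumption |].
  intros s Hs Hst.
  destruct (Hxm s Hs) as [Hxs Hmaxs].
  assert (Hlow := Hball s (xm t) (Rlt_le_trans _ _ _ Hst (Rmin_l _ _))).
  rewrite Rminus_diag, Rabs_R0 in Hlow. apply Rabs_def2 in Hlow; [| exact Hd1].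
  destruct (Hupper s (xm s) (Rlt_le_trans _ _ _ Hst (Rmin_r _ _)) Hxs) as [z [Hz Hup]].
  pose proof (Hmaxs (xm t) Hxt). pose proof (Hmaxt z Hz).
  apply Rabs_def1; lra.
Qed.

Lemma cont2_attains_max :
  0 <= t1 ->
  exists t0 x0, 0 <= t0 <= t1 /\ c <= x0 <= d /\
    forall t x, 0 <= t <= t1 -> c <= x <= d -> g t x <= g t0 x0.
Proof.
  intros Ht1.
  destruct slice_argmax as [xm Hxm].
  (* [continuity_ab_maj] needs two-sided continuity, so the slice maximum is extended
     constantly outside [0, t1]. *)
  set (clamp := fun s => Rmax 0 (Rmin s t1)).
  assert (Hclamp_in : forall s, 0 <= clamp s <= t1)
    by (intros s; unfold clamp, Rmax, Rmin; repeat destruct Rle_dec; lra).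
  assert (Hclamp_id : forall s, 0 <= s <= t1 -> clamp s = s)
    by (intros s Hs; unfold clamp, Rmax, Rmin; repeat destruct Rle_dec; lra).
  assert (Hclamp_lip : forall s t, 0 <= t <= t1 -> Rabs (clamp s - t) <= Rabs (s - t)).
  { intros s t Ht. unfold clamp, Rmax, Rmin.
    repeat destruct Rle_dec; unfold Rabs; repeat destruct Rcase_abs; lra. }
  set (m := fun s => g (clamp s) (xm (clamp s))).
  destruct (continuity_ab_maj m 0 t1 Ht1) as [t0 [Hmax Ht0]].
  - intros t Ht eps He.
    destruct (slice_max_continuous xm Hxm t eps Ht He) as [del [Hdel Hclose]].
    exists del; split; [exact Hdel |].
    intros s [_ Hs]. simpl in *. unfold R_dist in *. unfold m.
    rewrite (Hclamp_id t Ht).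
    apply Hclose; [apply Hclamp_in | eapply Rle_lt_trans; [apply Hclamp_lip, Ht | exact Hs]].
  - exists t0, (xm t0). destruct (Hxm t0 Ht0) as [Hx0 _].
    split; [exact Ht0 | split; [exact Hx0 |]].
    intros t x Ht Hx. specialize (Hmax t Ht). unfold m in Hmax.
    rewrite (Hclamp_id t Ht), (Hclamp_id t0 Ht0) in Hmax.
    destruct (Hxm t Ht) as [_ Hmaxt]. specialize (Hmaxt x Hx). lra.
Qed.

End MaxOnRectangle.

Definition lmcf_speed (n : nat) (phi : R -> R) (x y y' y'' : R) : R :=
  phi x * (y'' / (1 + y' ^ 2) + (INR n - 1) * (x * y' - y) / (x ^ 2 + y ^ 2)).

Lemma two_x_abs_le (x y : R) : 1 <= x -> 2 * (x * Rabs y) <= x ^ 4 + x ^ 2 * y ^ 2.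
Proof.
  intros Hx. rewrite <- (pow2_abs y). pose proof (Rabs_pos y).
  pose proof (Rmult_le_pos (x * (x - 1)) (Rabs y) ltac:(nra) ltac:(lra)).
  pose proof (pow2_ge_0 (x ^ 2 - Rabs y)).
  pose proof (Rmult_le_pos (x ^ 2 - 1) (Rabs y ^ 2) ltac:(nra) ltac:(nra)).
  nra.
Qed.

Lemma lower_order_numerator_le (x y' y1 y2 : R) :
  1 <= x ->
  y1 * y2 - x ^ 2 - x * y' * (y1 + y2)
    <= (1 + Rabs y') * ((x ^ 2 + y1 ^ 2) * (x ^ 2 + y2 ^ 2)).
Proof.
  intros Hx.
  set (D := (x ^ 2 + y1 ^ 2) * (x ^ 2 + y2 ^ 2)).
  pose proof (Rabs_pos y1). pose proof (Rabs_pos y2). pose proof (Rabs_pos y').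
  assert (Hx2 : 1 <= x ^ 2) by nra.
  assert (Hcross : y1 * y2 - x ^ 2 <= D).
  { pose proof (Rmult_le_pos _ _ (Rle_0_sqr (y1 * y2)) (Rle_0_sqr x)).
    pose proof (Rmult_le_pos (x ^ 2 - 1) (y1 ^ 2 + y2 ^ 2) ltac:(lra) ltac:(nra)).
    pose proof (pow2_ge_0 (y1 - y2)). pose proof (pow2_ge_0 (x ^ 2)).
    unfold D. nra. }
  assert (Hdrift : - (x * y' * (y1 + y2)) <= Rabs y' * (x * (Rabs y1 + Rabs y2))).
  { pose proof (Rle_abs (- (x * y' * (y1 + y2)))) as Habs.
    rewrite Rabs_Ropp, !Rabs_mult, (Rabs_pos_eq x) in Habs by lra.
    pose proof (Rabs_triang y1 y2).
    pose proof (Rmult_le_pos (x * Rabs y') (Rabs y1 + Rabs y2 - Rabs (y1 + y2))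
                  ltac:(apply Rmult_le_pos; lra) ltac:(lra)).
    nra. }
  assert (Hlin : x * (Rabs y1 + Rabs y2) <= D).
  { pose proof (two_x_abs_le x y1 Hx). pose proof (two_x_abs_le x y2 Hx).
    pose proof (Rle_0_sqr (y1 * y2)).
    pose proof (Rmult_le_pos _ _ (pow2_ge_0 x) (pow2_ge_0 y1)).
    pose proof (Rmult_le_pos _ _ (pow2_ge_0 x) (pow2_ge_0 y2)).
    unfold D, Rsqr in *. nra. }
  nra.
Qed.

Lemma lower_order_term_lipschitz (x y' y1 y2 : R) :
  1 <= x -> y2 <= y1 ->
  (x * y' - y1) / (x ^ 2 + y1 ^ 2) - (x * y' - y2) / (x ^ 2 + y2 ^ 2)
    <= (1 + Rabs y') * (y1 - y2).
Proof.
  intros Hx Hy.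
  assert (HD1 : 1 <= x ^ 2 + y1 ^ 2) by nra.
  assert (HD2 : 1 <= x ^ 2 + y2 ^ 2) by nra.
  replace ((x * y' - y1) / (x ^ 2 + y1 ^ 2) - (x * y' - y2) / (x ^ 2 + y2 ^ 2))
    with ((y1 - y2) * ((y1 * y2 - x ^ 2 - x * y' * (y1 + y2))
                       / ((x ^ 2 + y1 ^ 2) * (x ^ 2 + y2 ^ 2))))
    by (field; split; lra).
  rewrite (Rmult_comm (1 + Rabs y')).
  apply Rmult_le_compat_l; [lra |].
  apply Rle_div_l; [nra | apply lower_order_numerator_le, Hx].
Qed.

Lemma lmcf_speed_sub_le (n : nat) (phi : R -> R) (x y1 y2 y' u v Cphi P : R) :
  (1 <= n)%nat -> 1 <= x -> 0 <= phi x <= Cphi -> Rabs y' <= P -> y2 <= y1 -> u <= v ->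
  lmcf_speed n phi x y1 y' u - lmcf_speed n phi x y2 y' v
    <= Cphi * (INR n - 1) * (1 + P) * (y1 - y2).
Proof.
  intros Hn Hx Hphi HP Hy Huv. unfold lmcf_speed.
  assert (Hnn : 0 <= INR n - 1) by (apply le_INR in Hn; simpl in Hn; lra).
  assert (Hcurv : u / (1 + y' ^ 2) - v / (1 + y' ^ 2) <= 0).
  { pose proof (pow2_ge_0 y').
    replace (u / (1 + y' ^ 2) - v / (1 + y' ^ 2)) with ((u - v) / (1 + y' ^ 2)) by (field; lra).
    apply Rle_div_l; lra. }
  pose proof (lower_order_term_lipschitz x y' y1 y2 Hx Hy) as Hslope.
  unfold Rdiv in *. rewrite !(Rmult_assoc (INR n - 1)).
  set (Z1 := (x * y' - y1) * / (x ^ 2 + y1 ^ 2)) in *.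
  set (Z2 := (x * y' - y2) * / (x ^ 2 + y2 ^ 2)) in *.
  assert (Hz : (INR n - 1) * (Z1 - Z2) <= (INR n - 1) * ((1 + P) * (y1 - y2))).
  { apply Rmult_le_compat_l; [exact Hnn |]. pose proof (Rabs_pos y'). nra. }
  assert (Hk : 0 <= (INR n - 1) * ((1 + P) * (y1 - y2))).
  { pose proof (Rabs_pos y'). apply Rmult_le_pos; [exact Hnn | nra]. }
  nra.
Qed.

Definition is_LMCF_supersolution (n : nat) (a : R) (phi : R -> R) (T : Rbar)
    (w : R -> R -> R) : Prop :=
  forall t x, 0 <= t -> Rbar_lt (Finite t) T -> 1 <= x <= a ->
    ex_derive (fun s => w s x) t /\
    ex_derive (fun y => w t y) x /\
    ex_derive (fun y => dx w t y) x /\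
    cont2 w t x /\ cont2 (dx w) t x /\
    lmcf_speed n phi x (w t x) (dx w t x) (dxx w t x) <= dt w t x.

Definition barrier (c0 K B s r : R) (t x : R) : R := c0 + K * exp (B * t) * (s * x + r).

Lemma is_derive_barrier_x (c0 K B s r t x : R) :
  is_derive (fun y => barrier c0 K B s r t y) x (K * exp (B * t) * s).
Proof. unfold barrier. auto_derive; [auto | ring]. Qed.

Lemma dx_barrier (c0 K B s r t x : R) : dx (barrier c0 K B s r) t x = K * exp (B * t) * s.
Proof. apply is_derive_unique, is_derive_barrier_x. Qed.

Lemma dxx_barrier (c0 K B s r t x : R) : dxx (barrier c0 K B s r) t x = 0.
Proof.
  unfold dxx. rewrite (Derive_ext _ (fun _ => K * exp (B * t) * s)) by (intros; apply dx_barrier).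
  apply Derive_const.
Qed.

Lemma dt_barrier (c0 K B s r t x : R) :
  dt (barrier c0 K B s r) t x = K * (B * exp (B * t)) * (s * x + r).
Proof. apply is_derive_unique. unfold barrier. auto_derive; [auto | ring]. Qed.

Lemma cont2_barrier (c0 K B s r t x : R) : cont2 (barrier c0 K B s r) t x.
Proof.
  unfold cont2, barrier.
  apply (continuous_plus (fun _ : R * R => c0)
           (fun z : R * R => K * exp (B * fst z) * (s * snd z + r)));
    [apply continuous_const |].
  apply (continuous_mult (fun z : R * R => K * exp (B * fst z)) (fun z : R * R => s * snd z + r)).
  - apply (continuous_comp (fun z : R * R => fst z) (fun u => K * exp (B * u)));
      [apply continuous_fst |
       apply (@ex_derive_continuous R_AbsRing R_NormedModule); auto_derive; auto].
  - apply (continuous_comp (fun z : R * R => snd z) (fun u => s * u + r));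
      [apply continuous_snd |
       apply (@ex_derive_continuous R_AbsRing R_NormedModule); auto_derive; auto].
Qed.

Lemma barrier_speed_le (n : nat) (phi : R -> R) (c0 K B C s r t x : R) :
  (1 <= n)%nat -> 1 <= K -> 0 <= C -> 0 <= t -> 1 <= x ->
  (INR n - 1) * C * (Rabs c0 + Rabs r) <= B ->
  0 <= s * x + r -> 0 <= phi x <= C * (s * x + r) ->
  lmcf_speed n phi x (barrier c0 K B s r t x) (K * exp (B * t) * s) 0
    <= K * (B * exp (B * t)) * (s * x + r).
Proof.
  intros Hn HK HC Ht Hx HB Hl [Hphi0 HphiC]. unfold lmcf_speed, barrier.
  assert (Hnn : 0 <= INR n - 1) by (apply le_INR in Hn; simpl in Hn; lra).
  assert (HB0 : 0 <= B).
  { pose proof (Rmult_le_pos _ _ (Rmult_le_pos _ _ Hnn HC)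
                  (Rplus_le_le_0_compat _ _ (Rabs_pos c0) (Rabs_pos r))).
    lra. }
  set (e := exp (B * t)).
  assert (He : 1 <= e) by (unfold e; pose proof (exp_ineq1_le (B * t)); nra).
  assert (HKe : 1 <= K * e) by nra.
  set (N := x * (K * e * s) - (c0 + K * e * (s * x + r))).
  set (D := x ^ 2 + (c0 + K * e * (s * x + r)) ^ 2).
  assert (HD : 1 <= D) by (unfold D; pose proof (pow2_ge_0 (c0 + K * e * (s * x + r))); nra).
  assert (HN : Rabs N <= (Rabs c0 + Rabs r) * (K * e)).
  { replace N with (- (c0 + K * e * r)) by (unfold N; ring). rewrite Rabs_Ropp.
    eapply Rle_trans; [apply Rabs_triang |].
    rewrite Rabs_mult, (Rabs_pos_eq (K * e)) by lra.
    pose proof (Rmult_le_pos (Rabs c0) (K * e - 1) (Rabs_pos c0) ltac:(lra)). nra. }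
  assert (HND : N / D <= Rabs N).
  { pose proof (Rle_abs N). pose proof (Rabs_pos N). apply Rle_div_l; [lra | nra]. }
  replace (0 / (1 + (K * e * s) ^ 2) + (INR n - 1) * N / D) with ((INR n - 1) * (N / D))
    by (unfold Rdiv; ring).
  assert (Hstep1 : phi x * ((INR n - 1) * (N / D)) <= phi x * ((INR n - 1) * Rabs N))
    by (apply Rmult_le_compat_l; [lra | apply Rmult_le_compat_l; lra]).
  assert (Hstep2 : phi x * ((INR n - 1) * Rabs N)
                     <= C * (s * x + r) * ((INR n - 1) * ((Rabs c0 + Rabs r) * (K * e)))).
  { apply Rmult_le_compat; [lra | apply Rmult_le_pos; [lra | apply Rabs_pos] | lra |].
    apply Rmult_le_compat_l; lra. }
  assert (Hstep3 : (INR n - 1) * C * (Rabs c0 + Rabs r) * ((s * x + r) * (K * e))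
                     <= B * ((s * x + r) * (K * e)))
    by (apply Rmult_le_compat_r; [apply Rmult_le_pos; lra | exact HB]).
  nra.
Qed.

Lemma barrier_supersolution (n : nat) (a : R) (phi : R -> R) (T : Rbar) (c0 K B C s r : R) :
  (1 <= n)%nat -> 1 <= K -> 0 <= C -> (INR n - 1) * C * (Rabs c0 + Rabs r) <= B ->
  (forall x, 1 <= x <= a -> 0 <= s * x + r /\ 0 <= phi x <= C * (s * x + r)) ->
  is_LMCF_supersolution n a phi T (barrier c0 K B s r).
Proof.
  intros Hn HK HC HB Hphi t x Ht _ Hx.
  destruct (Hphi x Hx) as [Hl Hphix].
  repeat split.
  - unfold barrier. auto_derive. auto.
  - eexists. apply is_derive_barrier_x.
  - apply (ex_derive_ext (fun _ => K * exp (B * t) * s));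
      [intros; symmetry; apply dx_barrier | apply ex_derive_const].
  - apply cont2_barrier.
  - apply (cont2_ext (barrier 0 K B 0 s));
      [intros; rewrite dx_barrier; unfold barrier; ring | apply cont2_barrier].
  - rewrite dx_barrier, dxx_barrier, dt_barrier.
    exact (barrier_speed_le n phi c0 K B C s r t x Hn HK HC Ht (proj1 Hx) HB Hl Hphix).
Qed.

Section Solution.

Variables (n : nat) (a p q : R) (phi : R -> R) (T : Rbar) (f : R -> R -> R).
Hypothesis n_ge1 : (1 <= n)%nat.
Hypothesis a_gt1 : 1 < a.
Hypothesis f_sol : is_LMCF_solution n a p q phi T f.

Section Comparison.

Variables (w : R -> R -> R) (Cphi : R).
Hypothesis w_super : is_LMCF_supersolution n a phi T w.
Hypothesis phi_bounded : forall x, 1 <= x <= a -> 0 <= phi x <= Cphi.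

Lemma supersolution_no_positive_max (P lam t0 x0 : R) :
  0 < t0 -> Rbar_lt t0 T -> 1 < x0 < a ->
  Rabs (dx w t0 x0) <= P -> Cphi * (INR n - 1) * (1 + P) < lam ->
  (forall t x, 0 <= t <= t0 -> 1 <= x <= a ->
     exp (- lam * t) * (f t x - w t x) <= exp (- lam * t0) * (f t0 x0 - w t0 x0)) ->
  f t0 x0 <= w t0 x0.
Proof.
  intros Ht0 HT0 Hx0 HP Hlam Hmax.
  apply Rnot_lt_le; intros Hfw.
  destruct (f_sol t0 x0 ltac:(lra) HT0 ltac:(lra)) as [Hft [_ [Hfxx [_ [_ [_ [_ [Heq _]]]]]]]].
  destruct (w_super t0 x0 ltac:(lra) HT0 ltac:(lra)) as [Hwt [_ [Hwxx [_ [_ Hsuper]]]]].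
  assert (Hslice : forall y, 1 <= y <= a -> f t0 y - w t0 y <= f t0 x0 - w t0 x0).
  { intros y Hy. apply (Rmult_le_reg_l (exp (- lam * t0))); [apply exp_pos | apply Hmax; lra]. }
  assert (Hdiff : forall y, 1 < y < a ->
             is_derive (fun z => f t0 z - w t0 z) y (dx f t0 y - dx w t0 y)).
  { intros y Hy.
    destruct (f_sol t0 y ltac:(lra) HT0 ltac:(lra)) as [_ [Hfy _]].
    destruct (w_super t0 y ltac:(lra) HT0 ltac:(lra)) as [_ [Hwy _]].
    apply (is_derive_minus (fun z => f t0 z) (fun z => w t0 z)); apply Derive_correct; assumption. }
  assert (Hdx : dx f t0 x0 = dx w t0 x0).
  { pose proof (is_derive_max_interior _ 1 x0 a _ Hx0 Hslice (Hdiff x0 Hx0)). lra. }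
  assert (Hdxx : dxx f t0 x0 <= dxx w t0 x0).
  { assert (H2 : is_derive (fun y => dx f t0 y - dx w t0 y) x0 (dxx f t0 x0 - dxx w t0 x0)).
    { apply (is_derive_minus (fun y => dx f t0 y) (fun y => dx w t0 y));
        apply Derive_correct; assumption. }
    pose proof (is_derive2_max_interior _ _ 1 x0 a _ Hx0 Hslice Hdiff H2). lra. }
  assert (Hdt : lam * (f t0 x0 - w t0 x0) <= dt f t0 x0 - dt w t0 x0).
  { apply (exp_weighted_max_left (fun s => f s x0 - w s x0) lam 0 t0);
      [lra | intros s Hs; apply Hmax; lra |].
    apply (is_derive_minus (fun s => f s x0) (fun s => w s x0)); apply Derive_correct; assumption. }
  change (dt f t0 x0 = lmcf_speed n phi x0 (f t0 x0) (dx f t0 x0) (dxx f t0 x0)) in Heq.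
  rewrite Hdx in Heq.
  pose proof (lmcf_speed_sub_le n phi x0 (f t0 x0) (w t0 x0) (dx w t0 x0)
                (dxx f t0 x0) (dxx w t0 x0) Cphi P n_ge1 ltac:(lra)
                (phi_bounded x0 ltac:(lra)) HP ltac:(lra) Hdxx).
  nra.
Qed.

Lemma LMCF_comparison :
  (forall x, 1 <= x <= a -> f 0 x <= w 0 x) ->
  (forall t, 0 <= t -> Rbar_lt t T -> q <= w t 1 /\ p <= w t a) ->
  forall t x, 0 <= t -> Rbar_lt t T -> 1 <= x <= a -> f t x <= w t x.
Proof.
  intros Hinit Hbdry t1 x1 Ht1 HT1 Hx1.
  assert (HTt : forall t, 0 <= t <= t1 -> Rbar_lt t T)
    by (intros t Ht; apply Rbar_le_lt_trans with t1; [simpl; lra | exact HT1]).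
  destruct (cont2_attains_max (fun t x => Rabs (dx w t x)) t1 1 a) as [tP [xP [_ [_ HP]]]];
    [lra | | exact Ht1 |].
  { intros t x Ht Hx. apply cont2_abs. apply (w_super t x ltac:(lra) (HTt t Ht) Hx). }
  (* P bounds w_x on the rectangle, hence the one-sided Lipschitz constant of the lower-order
     term; the weight e^{-lam t} with lam above that constant rules out a positive maximum. *)
  set (P := Rabs (dx w tP xP)) in HP.
  set (lam := Cphi * (INR n - 1) * (1 + P) + 1).
  set (G := fun t x => exp (- lam * t) * (f t x - w t x)).
  destruct (cont2_attains_max G t1 1 a) as [t0 [x0 [Ht0 [Hx0 Hmax]]]]; [lra | | exact Ht1 |].
  { intros t x Ht Hx. apply cont2_exp_weighted_diff.
    - apply (f_sol t x ltac:(lra) (HTt t Ht) Hx).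
    - apply (w_super t x ltac:(lra) (HTt t Ht) Hx). }
  assert (HG0 : G t0 x0 <= 0).
  { apply Rnot_lt_le; intros Hpos.
    assert (Hfw : w t0 x0 < f t0 x0) by (unfold G in Hpos; pose proof (exp_pos (- lam * t0)); nra).
    destruct (f_sol t0 x0 ltac:(lra) (HTt t0 Ht0) Hx0) as [_ [_ [_ [_ [_ [_ [_ [_ [Hq Hp]]]]]]]]].
    destruct (Hbdry t0 ltac:(lra) (HTt t0 Ht0)) as [Hwq Hwp].
    assert (Ht0pos : 0 < t0).
    { destruct (Req_dec t0 0) as [-> | ?]; [specialize (Hinit x0 Hx0); lra | lra]. }
    assert (Hx0int : 1 < x0 < a).
    { destruct (Req_dec x0 1) as [-> | ?]; [lra |].
      destruct (Req_dec x0 a) as [-> | ?]; [lra | lra]. }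
    assert (Hle := supersolution_no_positive_max P lam t0 x0 Ht0pos (HTt t0 Ht0) Hx0int
                     (HP t0 x0 Ht0 Hx0) ltac:(unfold lam; lra)
                     (fun t x Ht Hx => Hmax t x ltac:(lra) Hx)).
    lra. }
  specialize (Hmax t1 x1 ltac:(lra) Hx1).
  unfold G in *. pose proof (exp_pos (- lam * t1)). nra.
Qed.

End Comparison.

Lemma solution_le_barrier (c0 K B C s r : R) :
  1 <= K -> 0 <= C -> (INR n - 1) * C * (Rabs c0 + Rabs r) <= B ->
  (forall x, 1 <= x <= a -> 0 <= s * x + r /\ 0 <= phi x <= C * (s * x + r)) ->
  (forall x, 1 <= x <= a -> f 0 x <= c0 + K * (s * x + r)) ->
  q <= c0 + K * (s + r) -> p <= c0 + K * (s * a + r) ->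
  forall t x, 0 <= t -> Rbar_lt t T -> 1 <= x <= a -> f t x <= barrier c0 K B s r t x.
Proof.
  intros HK HC HB Hphi Hinit Hq Hp.
  assert (HB0 : 0 <= B).
  { assert (Hnn : 0 <= INR n - 1) by (apply le_INR in n_ge1; simpl in n_ge1; lra).
    pose proof (Rmult_le_pos _ _ (Rmult_le_pos _ _ Hnn HC)
                  (Rplus_le_le_0_compat _ _ (Rabs_pos c0) (Rabs_pos r))).
    lra. }
  apply (LMCF_comparison _ (C * (Rabs s * a + Rabs r))).
  - apply barrier_supersolution with C; assumption.
  - intros x Hx. destruct (Hphi x Hx) as [_ [Hphi0 HphiC]].
    assert (Hl : s * x + r <= Rabs s * a + Rabs r).
    { pose proof (Rle_abs s). pose proof (Rle_abs r). pose proof (Rabs_pos s). nra. }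
    split; [exact Hphi0 |]. pose proof (Rmult_le_compat_l C _ _ HC Hl). lra.
  - intros x Hx. unfold barrier. rewrite Rmult_0_r, exp_0, Rmult_1_r. apply Hinit, Hx.
  - intros t Ht _. unfold barrier.
    assert (He : 1 <= exp (B * t)) by (pose proof (exp_ineq1_le (B * t)); nra).
    destruct (Hphi 1 ltac:(lra)) as [H1 _]. destruct (Hphi a ltac:(lra)) as [Ha _].
    rewrite Rmult_1_r in *.
    assert (He1 : 0 <= exp (B * t) - 1) by lra.
    pose proof (Rmult_le_pos _ _ (Rmult_le_pos K _ ltac:(lra) H1) He1).
    pose proof (Rmult_le_pos _ _ (Rmult_le_pos K _ ltac:(lra) Ha) He1).
    split; nra.
Qed.

Lemma initial_linear_bounds :
  Rbar_lt 0 T ->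
  exists M, 0 <= M /\ forall x, 1 <= x <= a ->
    f 0 x <= q + M * (x - 1) /\ f 0 x <= p + M * (a - x).
Proof.
  intros HT.
  destruct (lipschitz_of_continuous_derive (f 0) (dx f 0) 1 a) as [M [HM Hlip]]; [lra | | |].
  - intros x Hx. apply Derive_correct. apply (f_sol 0 x (Rle_refl 0) HT Hx).
  - intros x Hx. apply cont2_continuity_pt. apply (f_sol 0 x (Rle_refl 0) HT Hx).
  - exists M. split; [exact HM |]. intros x Hx.
    destruct (f_sol 0 x (Rle_refl 0) HT Hx) as [_ [_ [_ [_ [_ [_ [_ [_ [Hq Hp]]]]]]]]].
    pose proof (Rle_abs (f 0 x - f 0 1)). pose proof (Rle_abs (f 0 x - f 0 a)).
    specialize (Hlip x 1 Hx ltac:(lra)) as H1. specialize (Hlip x a Hx ltac:(lra)) as Ha.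
    rewrite (Rabs_pos_eq (x - 1)) in H1 by lra. rewrite (Rabs_left1 (x - a)) in Ha by lra.
    split; nra.
Qed.

Lemma slope_at_1_le (K B C : R) :
  1 <= K -> 0 <= C -> (INR n - 1) * C * (Rabs q + 1) <= B ->
  (forall x, 1 <= x <= a -> 0 <= phi x <= C * (x - 1)) ->
  (forall x, 1 <= x <= a -> f 0 x <= q + K * (x - 1)) ->
  p <= q + K * (a - 1) ->
  forall t, 0 <= t -> Rbar_lt t T -> dx f t 1 <= K * exp (B * t).
Proof.
  intros HK HC HB Hphi Hinit Hp t Ht HtT.
  assert (Hbelow : forall x, 1 <= x <= a -> f t x <= barrier q K B 1 (-1) t x).
  { intros x Hx.
    apply (solution_le_barrier q K B C 1 (-1)); try assumption.
    - rewrite (Rabs_left (-1)) by lra. lra.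
    - intros y Hy. replace (1 * y + -1) with (y - 1) by ring. split; [lra | apply Hphi, Hy].
    - intros y Hy. replace (1 * y + -1) with (y - 1) by ring. apply Hinit, Hy.
    - replace (1 + -1) with 0 by ring. lra.
    - replace (1 * a + -1) with (a - 1) by ring. exact Hp. }
  destruct (f_sol t 1 Ht HtT ltac:(lra)) as [_ [Hd1 [_ [_ [_ [_ [_ [_ [Hq _]]]]]]]]].
  pose proof (is_derive_le_of_touch_right (f t) (barrier q K B 1 (-1) t) 1 a
                (dx f t 1) _ a_gt1 Hbelow ltac:(unfold barrier; rewrite Hq; ring)
                (Derive_correct _ _ Hd1) (is_derive_barrier_x q K B 1 (-1) t 1)).
  lra.
Qed.

Lemma slope_at_a_ge (K B C : R) :
  1 <= K -> 0 <= C -> (INR n - 1) * C * (Rabs p + a) <= B ->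
  (forall x, 1 <= x <= a -> 0 <= phi x <= C * (a - x)) ->
  (forall x, 1 <= x <= a -> f 0 x <= p + K * (a - x)) ->
  q <= p + K * (a - 1) ->
  forall t, 0 <= t -> Rbar_lt t T -> - (K * exp (B * t)) <= dx f t a.
Proof.
  intros HK HC HB Hphi Hinit Hq t Ht HtT.
  assert (Hbelow : forall x, 1 <= x <= a -> f t x <= barrier p K B (-1) a t x).
  { intros x Hx.
    apply (solution_le_barrier p K B C (-1) a); try assumption.
    - rewrite (Rabs_pos_eq a) by lra. exact HB.
    - intros y Hy. replace (-1 * y + a) with (a - y) by ring. split; [lra | apply Hphi, Hy].
    - intros y Hy. replace (-1 * y + a) with (a - y) by ring. apply Hinit, Hy.
    - replace (-1 + a) with (a - 1) by ring. exact Hq.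
    - replace (-1 * a + a) with 0 by ring. lra. }
  destruct (f_sol t a Ht HtT ltac:(lra)) as [_ [Hda [_ [_ [_ [_ [_ [_ [_ Hp]]]]]]]]].
  pose proof (is_derive_le_of_touch_left (f t) (barrier p K B (-1) a t) 1 a
                (dx f t a) _ a_gt1 Hbelow ltac:(unfold barrier; rewrite Hp; ring)
                (Derive_correct _ _ Hda) (is_derive_barrier_x p K B (-1) a t a)).
  lra.
Qed.

Lemma boundary_slope_bounds :
  legendre_u2 a phi -> Rbar_lt 0 T ->
  exists K B, 0 <= K /\ 0 <= B /\ forall t, 0 <= t -> Rbar_lt t T ->
    dx f t 1 <= K * exp (B * t) /\ - (K * exp (B * t)) <= dx f t a.
Proof.
  intros Hphi HT.
  destruct (legendre_u2_linear_bounds a phi a_gt1 Hphi) as [C [HC Hphi_lin]].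
  destruct (initial_linear_bounds HT) as [M [HM Hinit]].
  assert (Hnn : 0 <= INR n - 1) by (apply le_INR in n_ge1; simpl in n_ge1; lra).
  pose proof (Rabs_pos p). pose proof (Rabs_pos q).
  pose proof (Rle_abs p). pose proof (Rle_abs q).
  pose proof (Rabs_maj2 p). pose proof (Rabs_maj2 q).
  set (K := 1 + M + (Rabs p + Rabs q) / (a - 1)).
  assert (HKa : K * (a - 1) = (1 + M) * (a - 1) + (Rabs p + Rabs q)) by (unfold K; field; lra).
  assert (HK : 1 + M <= K)
    by (unfold K; pose proof (Rdiv_le_0_compat (Rabs p + Rabs q) (a - 1)); lra).
  clearbody K.
  set (B := (INR n - 1) * C * (Rabs p + Rabs q + a)).
  assert (HB : forall b, b <= Rabs p + Rabs q + a -> (INR n - 1) * C * b <= B)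
    by (intros; apply Rmult_le_compat_l; [apply Rmult_le_pos |]; lra).
  exists K, B. split; [lra | split].
  { apply (Rle_trans _ ((INR n - 1) * C * 0)); [lra | apply HB; lra]. }
  assert (Hpq : p <= q + K * (a - 1) /\ q <= p + K * (a - 1)) by (split; nra).
  intros t Ht HtT. split.
  - apply (slope_at_1_le K B C);
      [lra | exact HC | apply HB; lra | | | apply Hpq | exact Ht | exact HtT].
    + intros x Hx. destruct (Hphi_lin x Hx) as [? [? _]]. lra.
    + intros x Hx. destruct (Hinit x Hx) as [? _].
      pose proof (Rmult_le_compat_r (x - 1) M K ltac:(lra) ltac:(lra)). lra.
  - apply (slope_at_a_ge K B C);
      [lra | exact HC | apply HB; lra | | | apply Hpq | exact Ht | exact HtT].
    + intros x Hx. destruct (Hphi_lin x Hx) as [? [_ ?]]. lra.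
    + intros x Hx. destruct (Hinit x Hx) as [_ ?].
      pose proof (Rmult_le_compat_r (a - x) M K ltac:(lra) ltac:(lra)). lra.
Qed.

End Solution.

Lemma dx_opp (f : R -> R -> R) (t x : R) : dx (fun t x => - f t x) t x = - dx f t x.
Proof. apply Derive_opp. Qed.

Lemma dxx_opp (f : R -> R -> R) (t x : R) : dxx (fun t x => - f t x) t x = - dxx f t x.
Proof.
  unfold dxx. rewrite (Derive_ext _ (fun y => - dx f t y)) by (intros; apply dx_opp).
  apply Derive_opp.
Qed.

Lemma dt_opp (f : R -> R -> R) (t x : R) : dt (fun t x => - f t x) t x = - dt f t x.
Proof. apply Derive_opp. Qed.

Lemma is_LMCF_solution_opp (n : nat) (a p q : R) (phi : R -> R) (T : Rbar) (f : R -> R -> R) :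
  is_LMCF_solution n a p q phi T f ->
  is_LMCF_solution n a (- p) (- q) phi T (fun t x => - f t x).
Proof.
  intros Hsol t x Ht HT Hx.
  destruct (Hsol t x Ht HT Hx) as [Dt [Dx [Dxx [C [Ct [Cx [Cxx [Eq [E1 Ea]]]]]]]]].
  repeat split.
  - apply (ex_derive_opp (fun s => f s x)), Dt.
  - apply (ex_derive_opp (fun y => f t y)), Dx.
  - apply (ex_derive_ext (fun y => - dx f t y)); [intros; symmetry; apply dx_opp |].
    apply (ex_derive_opp (fun y => dx f t y)), Dxx.
  - apply cont2_opp, C.
  - apply (cont2_ext (fun t x => - dt f t x));
      [intros; symmetry; apply dt_opp | apply cont2_opp, Ct].
  - apply (cont2_ext (fun t x => - dx f t x));
      [intros; symmetry; apply dx_opp | apply cont2_opp, Cx].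
  - apply (cont2_ext (fun t x => - dxx f t x));
      [intros; symmetry; apply dxx_opp | apply cont2_opp, Cxx].
  - rewrite dt_opp, dx_opp, dxx_opp, Eq.
    replace ((- dx f t x) ^ 2) with (dx f t x ^ 2) by ring.
    replace ((- f t x) ^ 2) with (f t x ^ 2) by ring.
    unfold Rdiv. ring.
  - rewrite E1. reflexivity.
  - rewrite Ea. reflexivity.
Qed.

Lemma exp_le_compat (x y : R) : x <= y -> exp x <= exp y.
Proof. intros [H | ->]; [left; apply exp_increasing, H | lra]. Qed.

Theorem proposition4p1 (n : nat) (a p q : R) (phi : R -> R) (T : Rbar)
    (f : R -> R -> R) :
  (2 <= n)%nat -> 1 < a -> legendre_u2 a phi ->
  is_LMCF_solution n a p q phi T f ->
  exists A B : R, forall t : R, 0 <= t -> Rbar_lt (Finite t) T ->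
    Rabs (dx f t 1) + Rabs (dx f t a) <= A * exp (B * t).
Proof.
  intros Hn Ha Hphi Hsol.
  assert (Hn1 : (1 <= n)%nat) by lia.
  destruct (classic (Rbar_lt 0 T)) as [HT | HT].
  2: { exists 0, 0. intros t Ht HtT. exfalso. apply HT.
       apply Rbar_le_lt_trans with t; [simpl; exact Ht | exact HtT]. }
  destruct (boundary_slope_bounds n a p q phi T f Hn1 Ha Hsol Hphi HT)
    as [K1 [B1 [HK1 [HB1 Hf]]]].
  destruct (boundary_slope_bounds n a (- p) (- q) phi T (fun t x => - f t x) Hn1 Ha
              (is_LMCF_solution_opp n a p q phi T f Hsol) Hphi HT)
    as [K2 [B2 [HK2 [HB2 Hg]]]].
  exists (2 * (K1 + K2)), (B1 + B2). intros t Ht HtT.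
  destruct (Hf t Ht HtT) as [Hf1 Hfa]. destruct (Hg t Ht HtT) as [Hg1 Hga].
  rewrite !dx_opp in Hg1, Hga.
  set (E := exp ((B1 + B2) * t)).
  assert (HE1 : K1 * exp (B1 * t) <= K1 * E)
    by (apply Rmult_le_compat_l, exp_le_compat; nra).
  assert (HE2 : K2 * exp (B2 * t) <= K2 * E)
    by (apply Rmult_le_compat_l, exp_le_compat; nra).
  pose proof (exp_pos (B1 * t)). pose proof (exp_pos (B2 * t)).
  assert (Rabs (dx f t 1) <= (K1 + K2) * E) by (apply Rabs_le; nra).
  assert (Rabs (dx f t a) <= (K1 + K2) * E) by (apply Rabs_le; nra).
  lra.
Qed.
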